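(* Let $X,Y\colon\mathcal H\leftarrow\mathcal G$ be groupoid correspondences. Any $\mathcal H,\mathcal G$-equivariant continuous map $\alpha\colon X\to Y$ is a local homeomorphism. Consequently, an injective such map is a homeomorphism from $X$ onto an open subset of $Y$, and it is a homeomorphism onto $Y$ if it is also surjective.
   Context: Groupoids are étale ($r,s$ local homeomorphisms, continuous multiplication and inversion) with Hausdorff locally compact object space. A groupoid correspondence $X\colon\mathcal H\leftarrow\mathcal G$ is a space with commuting continuous left $\mathcal H$-action (anchor $r\colon X\to\mathcal H^0$) and right $\mathcal G$-action (anchor $s\colon X\to\mathcal G^0$), such that $s$ is a local homeomorphism and the right action is free and proper. A map $\alpha$ is $\mathcal H,\mathcal G$-equivariant if it preserves both anchor maps and satisfies $\alpha(hxg)=h\alpha(x)g$. *)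

From HB Require Import structures.
From mathcomp Require Import all_boot all_order all_algebra.
From mathcomp Require Import all_classical all_reals topology.
Set Implicit Arguments. Unset Strict Implicit. Unset Printing Implicit Defensive.
Local Open Scope classical_set_scope.

(* f is a local homeomorphism: continuous, and every point has an open
   neighbourhood U such that f(U) is open and f restricted to U is a
   homeomorphism onto f(U) (i.e. injective on U and mapping open subsets
   of U to open sets). *)
Definition local_homeo (X Y : topologicalType) (f : X -> Y) : Prop :=
  continuous f /\
  forall x : X, exists U : set X,
    [/\ open U, U x, open (f @` U), {in U &, injective f} &
        forall V : set X, open V -> V `<=` U -> open (f @` V)].

Record etale_groupoid := EtaleGroupoid {
  arr : topologicalType;
  obj : topologicalType;
  gr : arr -> obj;
  gs : arr -> obj;
  gu : obj -> arr;
  ginv : arr -> arr;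
  gmul : arr -> arr -> arr;
  gr_u : forall x, gr (gu x) = x;
  gs_u : forall x, gs (gu x) = x;
  gr_mul : forall g h, gs g = gr h -> gr (gmul g h) = gr g;
  gs_mul : forall g h, gs g = gr h -> gs (gmul g h) = gs h;
  gmulA : forall g h k, gs g = gr h -> gs h = gr k ->
    gmul (gmul g h) k = gmul g (gmul h k);
  gmul1l : forall g, gmul (gu (gr g)) g = g;
  gmul1r : forall g, gmul g (gu (gs g)) = g;
  gr_inv : forall g, gr (ginv g) = gs g;
  gs_inv : forall g, gs (ginv g) = gr g;
  gmulV : forall g, gmul g (ginv g) = gu (gr g);
  gmulVg : forall g, gmul (ginv g) g = gu (gs g);
  gu_cont : continuous gu;
  ginv_cont : continuous ginv;
  gmul_cont : {within [set p : arr * arr | gs p.1 = gr p.2],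
                 continuous (fun p : arr * arr => gmul p.1 p.2)};
  gr_etale : local_homeo gr;
  gs_etale : local_homeo gs;
  obj_hausdorff : hausdorff_space obj;
  obj_locally_compact : locally_compact [set: obj]
}.

(* Groupoid correspondence X : H <- G. [lact h x] = h·x (defined when
   gs h = cr x), [ract x g] = x·g (defined when cs x = gr g). *)
Record correspondence (H G : etale_groupoid) := Correspondence {
  corr_space : topologicalType;
  cr : corr_space -> obj H;
  cs : corr_space -> obj G;
  lact : arr H -> corr_space -> corr_space;
  ract : corr_space -> arr G -> corr_space;
  cr_cont : continuous cr;
  lact_cont : {within [set p : arr H * corr_space | gs p.1 = cr p.2],
                 continuous (fun p : arr H * corr_space => lact p.1 p.2)};
  cr_lact : forall h x, gs h = cr x -> cr (lact h x) = gr h;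
  lact1 : forall x, lact (gu (cr x)) x = x;
  lactM : forall h k x, gs h = gr k -> gs k = cr x ->
    lact (gmul h k) x = lact h (lact k x);
  cs_etale : local_homeo cs;
  ract_cont : {within [set p : corr_space * arr G | cs p.1 = gr p.2],
                 continuous (fun p : corr_space * arr G => ract p.1 p.2)};
  cs_ract : forall x g, cs x = gr g -> cs (ract x g) = gs g;
  ract1 : forall x, ract x (gu (cs x)) = x;
  ractM : forall x g k, cs x = gr g -> gs g = gr k ->
    ract x (gmul g k) = ract (ract x g) k;
  cs_lact : forall h x, gs h = cr x -> cs (lact h x) = cs x;
  cr_ract : forall x g, cs x = gr g -> cr (ract x g) = cr x;
  lact_ract : forall h x g, gs h = cr x -> cs x = gr g ->
    lact h (ract x g) = ract (lact h x) g;
  ract_free : forall x g, cs x = gr g -> ract x g = x -> g = gu (cs x);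
  (* the right action is proper: the (continuous) map
     X ×_{G^0} G -> X × X, (x,g) |-> (x, x·g) has compact preimages of
     compact sets *)
  ract_proper : forall K : set (corr_space * corr_space), compact K ->
    compact [set p : corr_space * arr G | cs p.1 = gr p.2 /\ K (p.1, ract p.1 p.2)]
}.

Definition equivariant (H G : etale_groupoid) (X Y : correspondence H G)
  (a : corr_space X -> corr_space Y) : Prop :=
  [/\ forall x, cr (a x) = cr x,
      forall x, cs (a x) = cs x,
      forall h x, gs h = cr x -> a (lact h x) = lact h (a x) &
      forall x g, cs x = gr g -> a (ract x g) = ract (a x) g].

From mathcomp Require Import all_boot all_order all_algebra.
From mathcomp Require Import all_classical all_reals topology.
Local Open Scope classical_set_scope.

(* An equivariant map [a] commutes with the anchor maps [cs], which are local
   homeomorphisms on both sides.  So it suffices that a continuous [a] with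
   [q \o a = p], for local homeomorphisms [p] and [q], is one: if [U] is a
   sheet of [p] at [x] and [U'] a sheet of [q] at [a x], then [a] is injective
   on [W := U `&` a @^-1` U'] because [p] is, and for open [V] inside [W] we
   have [a @` V = U' `&` q @^-1` (p @` V)], which is open.  Local
   homeomorphisms are open maps, so a bijective one is a homeomorphism. *)

Lemma local_homeo_factor {X Y Z : topologicalType}
    {a : X -> Y} {p : X -> Z} {q : Y -> Z} :
  continuous a -> local_homeo p -> local_homeo q ->
  (forall x, q (a x) = p x) -> local_homeo a.
Proof.
move=> a_cont [_ p_lh] [q_cont q_lh] qaE; split=> // x.
have [U [oU Ux _ p_injU p_openU]] := p_lh x.
have [U' [oU' U'ax _ q_injU' _]] := q_lh (a x).
pose W := U `&` a @^-1` U'.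
have oW : open W by apply: openI => //; exact: open_comp.
have a_injW : {in W &, injective a}.
  move=> y z; rewrite !inE => -[Uy _] [Uz _] ayz.
  by apply: p_injU; rewrite ?inE // -!qaE ayz.
have a_openW V : open V -> V `<=` W -> open (a @` V).
  move=> oV VW.
  have -> : a @` V = U' `&` q @^-1` (p @` V).
    apply/seteqP; split.
    - by move=> _ [v Vv <-]; split; [case: (VW v Vv) | exists v].
    - move=> y [U'y [v Vv pvE]]; exists v => //.
      apply: q_injU'; rewrite ?inE ?qaE //; by case: (VW v Vv).
  apply: openI => //; apply: open_comp => [y _|]; first exact: q_cont.
  by apply: p_openU => // v /VW [].
by exists W; split => //; exact: a_openW.
Qed.

Lemma local_homeo_open_map {X Y : topologicalType} {f : X -> Y} :
  local_homeo f -> forall U, open U -> open (f @` U).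
Proof.
move=> [_ /choice [W f_lhW]] U oU.
have -> : f @` U = \bigcup_(x in U) f @` (U `&` W x).
  apply/seteqP; split.
  - by move=> _ [u Uu <-]; exists u => //; exists u => //; case: (f_lhW u).
  - by move=> _ [x _ [v [Uv _] <-]]; exists v.
apply: bigcup_open => x _.
by case: (f_lhW x) => oWx _ _ _ f_openW; apply: f_openW; [exact: openI|].
Qed.

Lemma open_map_cancel_continuous {X Y : topologicalType}
    {f : X -> Y} {g : Y -> X} :
  (forall U, open U -> open (f @` U)) -> cancel f g -> cancel g f ->
  continuous g.
Proof.
move=> f_open fK gK; apply/continuousP => U oU.
have -> : g @^-1` U = f @` U.
  apply/seteqP; split=> [y Ugy | _ [x Ux <-]]; last by rewrite /preimage /= fK.
  by exists (g y); rewrite ?gK.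
exact: f_open.
Qed.

Lemma equivariant_local_homeo {H G : etale_groupoid} {X Y : correspondence H G}
    {a : corr_space X -> corr_space Y} :
  equivariant a -> continuous a -> local_homeo a.
Proof.
move=> [_ csaE _ _] a_cont.
exact: local_homeo_factor a_cont (cs_etale X) (cs_etale Y) csaE.
Qed.

Theorem lemma6p1 (H G : etale_groupoid) (X Y : correspondence H G)
  (a : corr_space X -> corr_space Y) :
  equivariant a -> continuous a ->
  [/\ local_homeo a,
      injective a ->
        open (range a) /\ (forall U : set (corr_space X), open U -> open (a @` U)) &
      injective a -> (forall y, exists x, a x = y) ->
        exists b : corr_space Y -> corr_space X,
          [/\ continuous b, cancel a b & cancel b a]].
Proof.
move=> a_eqv a_cont.
have a_lh := equivariant_local_homeo a_eqv a_cont.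
have a_open := local_homeo_open_map a_lh.
split=> // [_ | a_inj /choice [b aK]]; first by split=> //; exact: a_open openT.
have bK : cancel a b by move=> x; apply: a_inj; rewrite aK.
by exists b; split=> //; exact: open_map_cancel_continuous a_open bK aK.
Qed.
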